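(* Let $A$ be the six-element poset $\{a_1,a_2,b_1,b_2,c_1,c_2\}$ whose order is generated by $a_i<b_j$ and $b_j<c_k$ for all $i,j,k\in\{1,2\}$ (so $a_1,a_2$ are incomparable, $b_1,b_2$ are incomparable, $c_1,c_2$ are incomparable, and $a_i<c_k$). Then $A$ is not cofibrant in the model structure on $\mathbf{Pos}$.
   Context: The model structure on $\mathbf{Pos}$: a map $f$ of posets is a weak equivalence/fibration iff it is so as a functor in the Thomason model structure on $\mathbf{Cat}$ (where $F$ is a weak equivalence/fibration iff $\mathrm{Ex}^2NF$ is one in the Kan–Quillen model structure on $\mathbf{sSet}$, $N$ the nerve, $\mathrm{Ex}$ Kan's functor); cofibrations are the maps with the left lifting property against acyclic fibrations. The classifying space of $A$ is homeomorphic to $S^2$. *)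

From Stdlib Require Import FunctionalExtensionality ProofIrrelevance.
From mathcomp Require Import all_boot.
Set Implicit Arguments. Unset Strict Implicit. Unset Printing Implicit Defensive.

Lemma sig_eq (A : Type) (P : A -> Prop) (x y : sig P) : sval x = sval y -> x = y.
Proof. case: x => x hx; case: y => y hy /= E; subst y; by rewrite (proof_irrelevance _ hx hy). Qed.

Lemma sig_fun_eq (A B : Type) (P : (A -> B) -> Prop) (x y : sig P) :
  (forall a, sval x a = sval y a) -> x = y.
Proof. by move=> H; apply: sig_eq; apply: functional_extensionality. Qed.

Record Poset := {
  pcar :> Type;
  ple : pcar -> pcar -> Prop;
  ple_refl : forall x, ple x x;
  ple_antisym : forall x y, ple x y -> ple y x -> x = y;
  ple_trans : forall x y z, ple x y -> ple y z -> ple x z }.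

Record Mono (P Q : Poset) := {
  mfun :> P -> Q;
  mfun_mono : forall x y, ple x y -> ple (mfun x) (mfun y) }.

(* The simplex category Delta: [n] = 'I_n.+1, morphisms monotone maps. *)
Definition dmono (m n : nat) :=
  {f : 'I_m.+1 -> 'I_n.+1 | forall i j : 'I_m.+1, i <= j -> f i <= f j}.

Record sSet := {
  sob :> nat -> Type;
  smap : forall m n, dmono m n -> sob n -> sob m;
  smap_id : forall n (f : dmono n n) (x : sob n),
      (forall i, sval f i = i) -> smap f x = x;
  smap_comp : forall k m n (f : dmono k m) (g : dmono m n) (h : dmono k n) (x : sob n),
      (forall i, sval h i = sval g (sval f i)) -> smap h x = smap f (smap g x) }.

Record sMap (X Y : sSet) := {
  sapp :> forall n, X n -> Y n;
  snat : forall m n (f : dmono m n) (x : X n), sapp (smap f x) = smap f (sapp x) }.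

Lemma sMap_ext X Y (u v : sMap X Y) :
  (forall n x, u n x = v n x) -> u = v.
Proof.
case: u => u hu; case: v => v hv /= H.
have E : u = v.
  apply: functional_extensionality_dep => n; apply: functional_extensionality => x; exact: H.
subst v; by rewrite (proof_irrelevance _ hu hv).
Qed.

Definition sMap_comp X Y Z (q : sMap Y Z) (p : sMap X Y) : sMap X Z.
Proof.
refine (@Build_sMap X Z (fun n x => q n (p n x)) _).
by move=> m n f x; rewrite snat snat.
Defined.

Definition nerve_ob (P : Poset) (n : nat) :=
  {s : 'I_n.+1 -> P | forall i j : 'I_n.+1, i <= j -> ple (s i) (s j)}.

Definition nerve_map (P : Poset) m n (f : dmono m n) (s : nerve_ob P n) : nerve_ob P m.
Proof.
exists (fun i => sval s (sval f i)).
by move=> i j hij; apply: (svalP s); apply: (svalP f).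
Defined.

Definition Nerve (P : Poset) : sSet.
Proof.
refine (@Build_sSet (nerve_ob P) (@nerve_map P) _ _).
- by move=> n f s Hf; apply: sig_fun_eq => i /=; rewrite Hf.
- by move=> k m n f g h s Hh; apply: sig_fun_eq => i /=; rewrite Hh.
Defined.

Definition nervemap_ob (P Q : Poset) (F : Mono P Q) n (s : Nerve P n) : Nerve Q n.
Proof.
exists (fun i => F (sval s i)).
by move=> i j hij; apply: mfun_mono; apply: (svalP s).
Defined.

Definition NerveMap (P Q : Poset) (F : Mono P Q) : sMap (Nerve P) (Nerve Q).
Proof.
refine (@Build_sMap (Nerve P) (Nerve Q) (@nervemap_ob P Q F) _).
by move=> m n f s; apply: sig_fun_eq.
Defined.

(* Kan's Ex functor: (Ex X)_n = Hom_sSet(sd Delta^n, X), where         *)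
(* sd Delta^n = N(poset of nonempty subsets of [n]).                    *)
Definition subs (n : nat) := {A : {set 'I_n.+1} | A != set0}.

Definition SubPoset (n : nat) : Poset.
Proof.
refine (@Build_Poset (subs n) (fun A B => sval A \subset sval B) _ _ _).
- by move=> A; exact: subxx.
- move=> A B h1 h2; apply: sig_eq; apply/eqP; by rewrite eqEsubset h1 h2.
- by move=> A B C; exact: subset_trans.
Defined.

Definition sub_push m n (f : dmono m n) (A : SubPoset m) : SubPoset n.
Proof.
exists (sval f @: sval A).
case: A => A /=; case/set0Pn => x hx; apply/set0Pn; exists (sval f x); exact: imset_f.
Defined.

Definition SubPush m n (f : dmono m n) : Mono (SubPoset m) (SubPoset n).
Proof.
refine (@Build_Mono _ _ (sub_push f) _).
by move=> A B hAB; rewrite /sub_push /=; apply: imsetS.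
Defined.

Definition Ex_ob (X : sSet) (n : nat) := sMap (Nerve (SubPoset n)) X.

Definition Ex_map (X : sSet) m n (f : dmono m n) (u : Ex_ob X n) : Ex_ob X m :=
  sMap_comp u (NerveMap (SubPush f)).

Definition Ex (X : sSet) : sSet.
Proof.
refine (@Build_sSet (Ex_ob X) (@Ex_map X) _ _).
- move=> n f u Hf; apply: sMap_ext => k s /=.
  congr (u k _); apply: sig_fun_eq => i /=; apply: sig_eq => /=.
  by rewrite (eq_imset _ Hf) imset_id.
- move=> k m n f g h u Hh; apply: sMap_ext => l s /=.
  congr (u l _); apply: sig_fun_eq => i /=; apply: sig_eq => /=.
  by rewrite -imset_comp; apply: eq_imset => i0; rewrite /= Hh.
Defined.

Definition ExMap (X Y : sSet) (p : sMap X Y) : sMap (Ex X) (Ex Y).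
Proof.
refine (@Build_sMap (Ex X) (Ex Y) (fun n u => sMap_comp p u) _).
by move=> m n f u; apply: sMap_ext.
Defined.

Definition OrdPoset (n : nat) : Poset.
Proof.
refine (@Build_Poset 'I_n.+1 (fun i j => i <= j) _ _ _).
- by move=> i; exact: leqnn.
- by move=> i j h1 h2; apply: val_inj; apply/eqP; rewrite eqn_leq h1 h2.
- by move=> i j k; exact: leq_trans.
Defined.

Definition Delta (n : nat) : sSet := Nerve (OrdPoset n).

Definition bd_ob (n m : nat) :=
  {s : Delta n m | exists j : 'I_n.+1, forall i, sval s i != j}.

Definition bd_map n m k (f : dmono m k) (s : bd_ob n k) : bd_ob n m.
Proof.
exists (smap f (sval s)).
case: s => s [j hj]; exists j => i; exact: hj.
Defined.

Definition Boundary (n : nat) : sSet.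
Proof.
refine (@Build_sSet (bd_ob n) (@bd_map n) _ _).
- by move=> k f s Hf; apply: sig_eq; exact: (@smap_id (Delta n) _ f _ Hf).
- by move=> k m l f g h s Hh; apply: sig_eq; exact: (@smap_comp (Delta n) _ _ _ f g h _ Hh).
Defined.

Definition bd_incl (n : nat) : sMap (Boundary n) (Delta n).
Proof.
refine (@Build_sMap (Boundary n) (Delta n) (fun m s => sval s) _).
by [].
Defined.

Definition sset_acyclic_fibration (X Y : sSet) (p : sMap X Y) : Prop :=
  forall (n : nat) (u : sMap (Boundary n) X) (v : sMap (Delta n) Y),
    (forall m x, p m (u m x) = v m (bd_incl n m x)) ->
    exists w : sMap (Delta n) X,
      (forall m x, w m (bd_incl n m x) = u m x) /\ (forall m x, p m (w m x) = v m x).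

(* acyclic fibrations of Pos (restricted Thomason model structure):
   Ex^2 N f is an acyclic fibration of simplicial sets *)
Definition pos_acyclic_fibration (P Q : Poset) (f : Mono P Q) : Prop :=
  sset_acyclic_fibration (ExMap (ExMap (NerveMap f))).

(* cofibrant object: the map from the initial (empty) poset has the left
   lifting property against all acyclic fibrations; since the square's
   top edge is from the empty poset, this amounts to lifting maps A -> Q. *)
Definition pos_cofibrant (A : Poset) : Prop :=
  forall (P Q : Poset) (f : Mono P Q), pos_acyclic_fibration f ->
    forall h : Mono A Q, exists l : Mono A P, forall a : A, f (l a) = h a.

Inductive Aelt := a1 | a2 | b1 | b2 | c1 | c2.

Definition Alevel (x : Aelt) : nat :=
  match x with a1 | a2 => 0 | b1 | b2 => 1 | c1 | c2 => 2 end.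

Definition Ale (x y : Aelt) : Prop := x = y \/ Alevel x < Alevel y.

Definition Aposet : Poset.
Proof.
refine (@Build_Poset Aelt Ale _ _ _).
- by move=> x; left.
- move=> x y [//|h1] [E|h2]; first by [].
  by have := ltn_trans h1 h2; rewrite ltnn.
- move=> x y z [->|h1] [<-|h2]; [by left|by right|by right|].
  by right; exact: ltn_trans h1 h2.
Defined.

(* For a poset Q, let X_Q be the poset of all iterated cell attachments over Q:
   a cell is a copy of sd^2 Delta^n glued along sd^2 dDelta^n to earlier cells
   and mapped to Q. An n-simplex of Ex^2 N P is a monotone map sd^2 Delta^n -> P,
   so every lifting problem of dDelta^n -> Delta^n against Ex^2 N (X_Q -> Q) is
   solved by attaching one new cell: X_Q -> Q is an acyclic fibration. If A were
   cofibrant, the identity of A would therefore lift to a section A -> X_A.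
   Consider a cell of maximal height met by such a section. The elements of A
   landing in it form an up-set, which cannot contain both b1 and b2: the union
   of their positions in the cell would be labelled by an element lying above
   b1, b2 and below c1, c2. So every element landing in the cell lies above one
   that does not; hence its position r is a nonempty chain, and the point u r of
   the attaching map below it carries the same label. Moving these elements to
   their points u r yields a section of smaller total height, so by induction no
   section exists. *)

From HB Require Import structures.
From Stdlib Require Import ProofIrrelevance ClassicalEpsilon.
From mathcomp Require Import all_boot zify.

Set Implicit Arguments. Unset Strict Implicit. Unset Printing Implicit Defensive.

Implicit Types (m n k j : nat).

Lemma setT_neq0 k : [set: 'I_k.+1] != set0.
Proof. by apply/set0Pn; exists ord0. Qed.

(* The empty set is sent to the junk value [setT]. *)
Definition nonempty_sub k (A : {set 'I_k.+1}) : subs k :=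
  insubd (exist (fun A : {set 'I_k.+1} => A != set0) setT (setT_neq0 k)) A.

Lemma nonempty_subE k (A : {set 'I_k.+1}) : A != set0 -> sval (nonempty_sub A) = A.
Proof. by move=> A_neq0; rewrite /nonempty_sub insubdK. Qed.

Section Retraction.

Variables (k : nat) (S : {set 'I_k.+1}).

Definition min_idx : nat := k - \max_(y in S) (k - y).

Lemma min_idx_mem : S != set0 -> exists2 y, y \in S & nat_of_ord y = min_idx.
Proof.
move=> S_neq0; have S_gt0 : 0 < #|mem S| by rewrite card_gt0.
have [y Sy yE] := eq_bigmax_cond (fun y : 'I_k.+1 => k - y) S_gt0.
by exists y => //; rewrite /min_idx yE subKn // -ltnS ltn_ord.
Qed.

Lemma min_idx_le y : y \in S -> min_idx <= y.
Proof.
move=> Sy; have := leq_bigmax_cond (F := fun y : 'I_k.+1 => k - y) _ Sy.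
rewrite /min_idx; set M := \max_(_ in _) _; lia.
Qed.

(* The monotone retraction of [k] onto [S]: round down to [S], or up to its minimum. *)
Definition retract (x : 'I_k.+1) : 'I_k.+1 :=
  inord (\max_(y in S | y <= maxn x min_idx) y).

Lemma retractE x : nat_of_ord (retract x) = \max_(y in S | y <= maxn x min_idx) y.
Proof. by rewrite inordK // ltnS; apply/bigmax_leqP => y _; rewrite -ltnS. Qed.

Lemma retract_mem x : S != set0 -> retract x \in S.
Proof.
move=> S_neq0; have [y0 Sy0 y0E] := min_idx_mem S_neq0.
pose A := [pred y : 'I_k.+1 | (y \in S) && (y <= maxn x min_idx)].
have A_gt0 : 0 < #|A| by apply/card_gt0P; exists y0; rewrite !inE Sy0 /= y0E; lia.
have [y /andP [Sy _] yE] := eq_bigmax_cond (@nat_of_ord _) A_gt0.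
suff -> : retract x = y by [].
by apply: ord_inj; rewrite retractE yE.
Qed.

Lemma retract_id x : x \in S -> retract x = x.
Proof.
move=> Sx; have := min_idx_le Sx => le_min.
apply: ord_inj; rewrite retractE; apply/eqP; rewrite eqn_leq; apply/andP; split.
  by apply/bigmax_leqP => y /andP [_]; lia.
by apply: (leq_bigmax_cond (F := @nat_of_ord _)); rewrite Sx /=; lia.
Qed.

Lemma retract_mono (x x' : 'I_k.+1) : x <= x' -> retract x <= retract x'.
Proof.
move=> le_xx'; rewrite !retractE; apply/bigmax_leqP => y /andP [Sy le_y].
by apply: (leq_bigmax_cond (F := @nat_of_ord _)); rewrite Sy /=; lia.
Qed.

Definition retract_delta : dmono k k := exist _ retract retract_mono.

Lemma retract_image : S != set0 -> retract @: setT = S.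
Proof.
move=> S_neq0; apply/setP => y; apply/imsetP/idP => [[x _ ->]|Sy].
  exact: retract_mem.
by exists y; rewrite ?retract_id.
Qed.

End Retraction.

Definition fam n := {set {set 'I_n.+1}}.

Definition is_chain n (s : fam n) :=
  [forall T in s, forall T' in s, (T \subset T') || (T' \subset T)].

(* The vertices of sd^2 Delta^n and of sd^2 dDelta^n are the nonempty chains of
   nonempty subsets of [n], resp. of nonempty proper subsets. *)
Definition sd2_vertex n (s : fam n) := [&& s != set0, set0 \notin s & is_chain s].
Definition proper_chain n (s : fam n) := [&& set0 \notin s, setT \notin s & is_chain s].
Definition sd2_bd_vertex n (s : fam n) := (s != set0) && proper_chain s.

Section Chains.

Variable n : nat.
Implicit Types (s : fam n) (T : {set 'I_n.+1}).

Lemma chainP s T T' :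
  is_chain s -> T \in s -> T' \in s -> (T \subset T') || (T' \subset T).
Proof. by move=> /forall_inP ch sT sT'; have /forall_inP := ch T sT; apply. Qed.

Lemma chain_sub_card s T T' :
  is_chain s -> T \in s -> T' \in s -> #|T| <= #|T'| -> T \subset T'.
Proof.
move=> ch sT sT' le_TT'; case/orP: (chainP ch sT sT') => // sub_T'T.
by have /eqP <- : T' == T by rewrite eqEcard sub_T'T le_TT'.
Qed.

Lemma is_chainS s s' : s' \subset s -> is_chain s -> is_chain s'.
Proof.
move=> /subsetP ss' ch; apply/forall_inP => T /ss' sT; apply/forall_inP => T' /ss' sT'.
exact: chainP ch sT sT'.
Qed.

Lemma sd2_vertex_neq0 s T : sd2_vertex s -> T \in s -> T != set0.
Proof. by case/and3P => _ s0 _ sT; apply: contraNneq s0 => <-. Qed.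

Lemma proper_chainS s s' : s' \subset s -> proper_chain s -> proper_chain s'.
Proof.
move=> ss' /and3P [s0 sT ch]; apply/and3P; split; last exact: is_chainS ch.
  by apply: contra s0; apply: (subsetP ss').
by apply: contra sT; apply: (subsetP ss').
Qed.

Lemma proper_chain0 : proper_chain (set0 : fam n).
Proof. by apply/and3P; split; rewrite ?inE //; apply/forall_inP => T; rewrite inE. Qed.

Lemma sd2_bd_vertexW s : sd2_bd_vertex s -> sd2_vertex s.
Proof. by case/andP => s_neq0 /and3P [s0 _ ch]; rewrite /sd2_vertex s_neq0 s0 ch. Qed.

Lemma sd2_vertex_bd s : sd2_vertex s -> setT \notin s -> sd2_bd_vertex s.
Proof.
by case/and3P => s_neq0 s0 ch sT; rewrite /sd2_bd_vertex /proper_chain s_neq0 s0 sT ch.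
Qed.

Lemma sd2_vertex_setU1 s : proper_chain s -> sd2_vertex (s :|: [set setT]).
Proof.
case/and3P => s0 _ ch; apply/and3P; split.
- by apply/set0Pn; exists setT; rewrite !inE eqxx orbT.
- by rewrite !inE negb_or s0 eq_sym setT_neq0.
apply/forall_inP => T; rewrite !inE => /orP [sT|/eqP->]; apply/forall_inP => T';
  rewrite !inE => /orP [sT'|/eqP->]; rewrite ?subsetT ?orbT //.
exact: chainP ch sT sT'.
Qed.

Lemma proper_chainD1 s : sd2_vertex s -> proper_chain (s :\ setT).
Proof.
case/and3P => _ s0 ch; apply/and3P; split; last by apply: is_chainS ch; apply: subsetDl.
  by rewrite !inE negb_and s0 orbT.
by rewrite !inE eqxx.
Qed.

End Chains.

Lemma card_set_ord m (T : {set 'I_m.+1}) : #|T| <= m.+1.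
Proof. by have := max_card (mem T); rewrite card_ord. Qed.

Definition rank m (T : {set 'I_m.+1}) : 'I_m.+1 := inord #|T|.-1.

Lemma rankE m (T : {set 'I_m.+1}) : nat_of_ord (rank T) = #|T|.-1.
Proof. by rewrite inordK //; have := card_set_ord T; lia. Qed.

Lemma rank_mono m (T T' : {set 'I_m.+1}) : T \subset T' -> rank T <= rank T'.
Proof.
move=> sub; rewrite !rankE -!subn1 leq_sub2r //; exact: subset_leq_card.
Qed.

Definition chain_ranks m (s : fam m) : {set 'I_m.+1} := [set rank T | T in s].

Lemma chain_ranks_neq0 m (s : fam m) : sd2_vertex s -> chain_ranks s != set0.
Proof. by rewrite imset_eq0; case/and3P. Qed.

(* A chain [s] spans the [m]-simplex of sd Delta^m whose [i]-th vertex is the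
   smallest member of [s] of size [> i] (along a chain, the intersection of all
   of them), so that its vertex of index [#|T| - 1] is [T]. *)
Definition rank_cap m (s : fam m) (i : 'I_m.+1) : {set 'I_m.+1} :=
  \bigcap_(T in s | i < #|T|) T.

Section RankCap.

Variables (m : nat) (s : fam m).

Lemma rank_cap_mono (i i' : 'I_m.+1) : i <= i' -> rank_cap s i \subset rank_cap s i'.
Proof.
move=> le_ii'; apply/subsetP => x /bigcapP x_cap; apply/bigcapP => T /andP [sT lt_i'T].
by apply: x_cap; rewrite sT (leq_ltn_trans le_ii').
Qed.

Lemma rank_cap_neq0 i : is_chain s -> rank_cap s i != set0.
Proof.
move=> ch; pose A := [pred T | (T \in s) && (i < #|T|)].
case: (pickP A) => [T0 AT0|A0]; last first.
  suff -> : rank_cap s i = setT by apply: setT_neq0.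
  by apply/setP => x; rewrite inE; apply/bigcapP => T AT; have := A0 T; rewrite /= AT.
case: (arg_minnP (fun T : {set 'I_m.+1} => #|T|) AT0) => T1 /andP [sT1 lt_iT1] T1_min.
have /set0Pn [x T1x] : T1 != set0 by rewrite -card_gt0 (leq_ltn_trans _ lt_iT1).
apply/set0Pn; exists x; apply/bigcapP => T /[dup] AT /andP [sT _].
by apply: (subsetP (chain_sub_card ch sT1 sT (T1_min _ AT))).
Qed.

Lemma rank_cap_rank T : is_chain s -> T \in s -> T != set0 -> rank_cap s (rank T) = T.
Proof.
move=> ch sT T_neq0; have T_gt0 : 0 < #|T| by rewrite card_gt0.
apply/eqP; rewrite eqEsubset; apply/andP; split.
  by rewrite /rank_cap; apply: bigcap_inf; rewrite sT rankE ltn_predL.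
apply/subsetP => x Tx; apply/bigcapP => T' /andP [sT' lt_T'].
by apply: (subsetP (chain_sub_card ch sT sT' _)); rewrite // -(prednK T_gt0) -rankE.
Qed.

End RankCap.

Definition chain_vertex m (s : fam m) (i : 'I_m.+1) : subs m :=
  nonempty_sub (if is_chain s then rank_cap s i else setT).

Lemma chain_vertex_mono m (s : fam m) (i j : 'I_m.+1) :
  i <= j -> sval (chain_vertex s i) \subset sval (chain_vertex s j).
Proof.
rewrite /chain_vertex; case: ifP => [ch|_] le_ij; last by [].
by rewrite !nonempty_subE ?rank_cap_neq0 ?rank_cap_mono.
Qed.

Definition chain_simplex m (s : fam m) : Nerve (SubPoset m) m :=
  exist _ (chain_vertex s) (@chain_vertex_mono m s).

Lemma chain_simplexE m (s : fam m) T :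
  is_chain s -> T \in s -> T != set0 -> sval (sval (chain_simplex s) (rank T)) = T.
Proof.
move=> ch sT T_neq0.
by rewrite /= /chain_vertex ch nonempty_subE ?rank_cap_neq0 ?rank_cap_rank.
Qed.

Definition face_chain m k (t : Nerve (SubPoset m) k) (S : {set 'I_k.+1}) : fam m :=
  [set sval (sval t x) | x in S].

Definition fam_image m m' (f : 'I_m'.+1 -> 'I_m.+1) (s : fam m') : fam m :=
  [set f @: T | T : {set 'I_m'.+1} in s].

Lemma sd2_vertex_face_chain m k (t : Nerve (SubPoset m) k) S :
  S != set0 -> sd2_vertex (face_chain t S).
Proof.
move=> /set0Pn [x0 Sx0]; apply/and3P; split.
- by apply/set0Pn; exists (sval (sval t x0)); apply: imset_f.
- by apply/imsetP => -[x _ /esym/eqP]; apply/negP; apply: (svalP (sval t x)).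
apply/forall_inP => _ /imsetP [x _ ->]; apply/forall_inP => _ /imsetP [y _ ->].
by case: (leqP x y) => [/(svalP t) -> | /ltnW /(svalP t) ->]; rewrite ?orbT.
Qed.

Lemma face_chain_simplex m (s s' : fam m) :
  sd2_vertex s' -> s \subset s' -> face_chain (chain_simplex s') (chain_ranks s) = s.
Proof.
move=> /[dup] v' /and3P [_ _ ch] ss'.
have simplexE T : T \in s -> sval (sval (chain_simplex s') (rank T)) = T.
  move=> sT; have s'T := subsetP ss' T sT.
  by rewrite chain_simplexE // (sd2_vertex_neq0 v').
apply/setP => T; apply/imsetP/idP => [[_ /imsetP [T' sT' ->] ->]|sT].
  by rewrite simplexE.
by exists (rank T); [apply: imset_f | rewrite simplexE].
Qed.

Lemma face_chain_smap m k k' (d : dmono k' k) (t : Nerve (SubPoset m) k) S :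
  face_chain (smap d t) S = face_chain t (sval d @: S).
Proof. by rewrite /face_chain -imset_comp. Qed.

Lemma face_chain_push m m' (d : dmono m' m) k (t : Nerve (SubPoset m') k) S :
  face_chain (NerveMap (SubPush d) k t) S = fam_image (sval d) (face_chain t S).
Proof. by rewrite /face_chain /fam_image -imset_comp. Qed.

Lemma sd2_vertex_image m m' (f : 'I_m'.+1 -> 'I_m.+1) (s : fam m') :
  sd2_vertex s -> sd2_vertex (fam_image f s).
Proof.
case/and3P => /set0Pn [T0 sT0] s0 ch; apply/and3P; split.
- by apply/set0Pn; exists (f @: T0); apply: imset_f.
- apply/imsetP => -[T sT /esym/eqP]; rewrite imset_eq0; apply/negP.
  by apply: contraNneq s0 => <-.
apply/forall_inP => _ /imsetP [T1 sT1 ->]; apply/forall_inP => _ /imsetP [T2 sT2 ->].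
by case/orP: (chainP ch sT1 sT2) => /(imsetS f) ->; rewrite ?orbT.
Qed.

Lemma fam_image_comp m m' m'' (f : 'I_m'.+1 -> 'I_m.+1) (g : 'I_m''.+1 -> 'I_m'.+1)
    (s : fam m'') :
  fam_image (f \o g) s = fam_image f (fam_image g s).
Proof. by rewrite /fam_image -imset_comp; apply: eq_imset => T; apply: imset_comp. Qed.

Lemma fam_image_id m (f : 'I_m.+1 -> 'I_m.+1) (s : fam m) :
  {in \bigcup_(T in s) T, f =1 id} -> fam_image f s = s.
Proof.
move=> f_id; have imE T : T \in s -> f @: T = T.
  move=> sT; rewrite -[RHS]imset_id; apply: eq_in_imset => x Tx.
  by apply: f_id; apply/bigcupP; exists T.
apply/setP => T; apply/imsetP/idP => [[T' sT' ->]|sT]; first by rewrite imE.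
by exists T; rewrite ?imE.
Qed.

Definition point (R : Poset) (r : R) : Nerve R 0.
Proof. by exists (fun _ => r) => *; apply: ple_refl. Defined.

Lemma edge_mono (R : Poset) (x y : R) : ple x y ->
  forall i j : 'I_2, i <= j ->
    ple (if i == ord0 then x else y) (if j == ord0 then x else y).
Proof. by move=> le_xy [[|[|?]] ?] [[|[|?]] ?] //= _; apply: ple_refl. Qed.

Definition edge (R : Poset) (x y : R) (le_xy : ple x y) : Nerve R 1.
Proof. exact: exist _ _ (edge_mono le_xy). Defined.

Lemma nerve_map_vertex (R P : Poset) (phi : sMap (Nerve R) (Nerve P)) j (p : Nerve R j) i :
  sval (phi j p) i = sval (phi 0 (point (sval p i))) ord0.
Proof.
pose c : dmono 0 j :=
  exist (fun f : 'I_1 -> 'I_j.+1 => forall a b : 'I_1, a <= b -> f a <= f b)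
    (fun _ => i) (fun _ _ _ => leqnn i).
have -> : point (sval p i) = smap c p by apply: sig_fun_eq.
by rewrite (snat phi c p).
Qed.

Section Ex2Vertices.

Variable P : Poset.

(* An [m]-simplex [Th] of Ex^2 N P is a simplicial map sd^2 Delta^m -> N P:
   [ex2_eval Th t p i] is its value at the [i]-th vertex of [p], a simplex of
   sd Delta^k lying over the simplex [t] of sd Delta^m, and [ex2_val Th s] its
   value at the vertex of sd^2 Delta^m given by the chain [s]. *)
Definition ex2_eval m (Th : Ex (Ex (Nerve P)) m) k (t : Nerve (SubPoset m) k)
    j (p : Nerve (SubPoset k) j) (i : 'I_j.+1) : P :=
  sval (((Th : sMap (Nerve (SubPoset m)) (Ex (Nerve P))) k t
           : sMap (Nerve (SubPoset k)) (Nerve P)) j p) i.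

Lemma ex2_eval_mono m (Th : Ex (Ex (Nerve P)) m) k (t : Nerve (SubPoset m) k)
    j (p : Nerve (SubPoset k) j) (i i' : 'I_j.+1) :
  i <= i' -> ple (ex2_eval Th t p i) (ex2_eval Th t p i').
Proof.
exact: (svalP (((Th : sMap (Nerve (SubPoset m)) (Ex (Nerve P))) k t
                  : sMap (Nerve (SubPoset k)) (Nerve P)) j p)).
Qed.

Definition ex2_val m (Th : Ex (Ex (Nerve P)) m) (s : fam m) : P :=
  ex2_eval Th (chain_simplex s) (@point (SubPoset _) (nonempty_sub (chain_ranks s))) ord0.

Lemma ex2_eval_smap m (Th : Ex (Ex (Nerve P)) m) k k' (d : dmono k' k)
    (t : Nerve (SubPoset m) k) j (p : Nerve (SubPoset k') j) i :
  ex2_eval Th (smap d t) p i = ex2_eval Th t (NerveMap (SubPush d) j p) i.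
Proof. by rewrite /ex2_eval (snat Th d t). Qed.

Lemma point_retract k (S : subs k) :
  @point (SubPoset k) S =
    NerveMap (SubPush (retract_delta (sval S))) 0 (@point (SubPoset _) (nonempty_sub setT)).
Proof.
apply: sig_fun_eq => x; apply: sig_eq.
by rewrite /= nonempty_subE ?setT_neq0 // retract_image //; apply: (svalP S).
Qed.

Lemma smap_retract_face m k (t : Nerve (SubPoset m) k) (S : {set 'I_k.+1}) :
  S != set0 -> exists2 eps : dmono k m,
    smap (retract_delta S) t = smap eps (chain_simplex (face_chain t S))
    & sval eps @: setT = chain_ranks (face_chain t S).
Proof.
move=> S_neq0; set s := face_chain t S.
pose vtx x := sval (sval t (retract S x)).
have eps_mono (x y : 'I_k.+1) : x <= y -> rank (vtx x) <= rank (vtx y).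
  by move=> le_xy; apply/rank_mono/(svalP t)/retract_mono.
have s_vtx x : vtx x \in s by apply: imset_f; apply: retract_mem.
exists (exist _ _ eps_mono).
  apply: sig_fun_eq => x; apply: sig_eq => /=.
  rewrite -/(vtx x) chain_simplexE ?s_vtx //; last exact: (svalP (sval t _)).
  by case/and3P: (sd2_vertex_face_chain t S_neq0).
apply/setP => T; apply/imsetP/imsetP => [[x _ ->]|[_ /imsetP [y Sy ->] ->]].
  by exists (vtx x); first exact: s_vtx.
by exists y; rewrite ?in_setT //= /vtx retract_id.
Qed.

Lemma ex2_evalE m (Th : Ex (Ex (Nerve P)) m) k (t : Nerve (SubPoset m) k) j
    (p : Nerve (SubPoset k) j) i :
  ex2_eval Th t p i = ex2_val Th (face_chain t (sval (sval p i))).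
Proof.
rewrite /ex2_eval nerve_map_vertex -/(ex2_eval Th t (point (sval p i)) ord0).
have S_neq0 := svalP (sval p i).
rewrite point_retract -ex2_eval_smap.
have [eps -> eps_im] := smap_retract_face t S_neq0.
rewrite ex2_eval_smap /ex2_val; congr ex2_eval.
apply: sig_fun_eq => x; apply: sig_eq.
by rewrite /= !nonempty_subE ?setT_neq0 // -eps_im imset_eq0 setT_neq0.
Qed.

Lemma ex2_ext m (Th Th' : Ex (Ex (Nerve P)) m) :
  (forall s, sd2_vertex s -> ex2_val Th s = ex2_val Th' s) -> Th = Th'.
Proof.
move=> eq_val; apply: sMap_ext => k t; apply: sMap_ext => j p; apply: sig_fun_eq => i.
change (ex2_eval Th t p i = ex2_eval Th' t p i); rewrite !ex2_evalE.
by apply: eq_val; apply: sd2_vertex_face_chain; apply: (svalP (sval p i)).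
Qed.

Lemma ex2_val_mono m (Th : Ex (Ex (Nerve P)) m) (s s' : fam m) :
  sd2_vertex s -> sd2_vertex s' -> s \subset s' -> ple (ex2_val Th s) (ex2_val Th s').
Proof.
move=> v v' ss'.
have ranks_neq0 := chain_ranks_neq0 v; have ranks'_neq0 := chain_ranks_neq0 v'.
have le_ranks :
    ple (nonempty_sub (chain_ranks s) : SubPoset m) (nonempty_sub (chain_ranks s')).
  by rewrite /= !nonempty_subE ?imsetS.
have := ex2_eval_mono Th (chain_simplex s') (edge le_ranks) (isT : ord0 <= ord_max).
by rewrite !ex2_evalE /= !nonempty_subE ?face_chain_simplex.
Qed.

Lemma ex2_eval_push m m' (d : dmono m' m) (Th : Ex (Ex (Nerve P)) m) k
    (t : Nerve (SubPoset m') k) j (p : Nerve (SubPoset k) j) i :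
  ex2_eval (smap d Th) t p i = ex2_eval Th (NerveMap (SubPush d) k t) p i.
Proof. by []. Qed.

Lemma ex2_val_smap m m' (d : dmono m' m) (Th : Ex (Ex (Nerve P)) m) (s : fam m') :
  sd2_vertex s -> ex2_val (smap d Th) s = ex2_val Th (fam_image (sval d) s).
Proof.
move=> v; rewrite /ex2_val ex2_eval_push ex2_evalE face_chain_push /=.
by rewrite nonempty_subE ?face_chain_simplex ?chain_ranks_neq0.
Qed.

End Ex2Vertices.

Section Ex2OfVertexMap.

Variables (P : Poset) (n : nat) (W : fam n -> P).
Hypothesis W_mono :
  forall s s', sd2_vertex s -> sd2_vertex s' -> s \subset s' -> ple (W s) (W s').

Lemma face_value_mono m (f : 'I_m.+1 -> 'I_n.+1) k (t : Nerve (SubPoset m) k)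
    (S S' : SubPoset k) :
  ple S S' -> ple (W (fam_image f (face_chain t (sval S))))
                  (W (fam_image f (face_chain t (sval S')))).
Proof.
move=> le_SS'; apply: W_mono; last by apply: imsetS; apply: imsetS.
  by apply/sd2_vertex_image/sd2_vertex_face_chain; apply: (svalP S).
by apply/sd2_vertex_image/sd2_vertex_face_chain; apply: (svalP S').
Qed.

Definition face_value m (f : 'I_m.+1 -> 'I_n.+1) k (t : Nerve (SubPoset m) k) :
  Mono (SubPoset k) P := Build_Mono (face_value_mono f t).

Definition ex2_simplex m (f : 'I_m.+1 -> 'I_n.+1) : Ex (Ex (Nerve P)) m.
Proof.
refine (@Build_sMap (Nerve (SubPoset m)) (Ex (Nerve P))
          (fun k t => NerveMap (face_value f t)) _).
move=> k' k d t; apply: sMap_ext => j p; apply: sig_fun_eq => i.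
by rewrite /= face_chain_smap.
Defined.

Definition ex2_of_vertex_map : sMap (Delta n) (Ex (Ex (Nerve P))).
Proof.
refine (@Build_sMap (Delta n) (Ex (Ex (Nerve P))) (fun m x => ex2_simplex (sval x)) _).
move=> m m' d x; apply: sMap_ext => k t; apply: sMap_ext => j p; apply: sig_fun_eq => i.
by rewrite /= face_chain_push -fam_image_comp.
Defined.

Lemma ex2_of_vertex_mapE m (x : Delta n m) (s : fam m) :
  sd2_vertex s -> ex2_val (ex2_of_vertex_map m x) s = W (fam_image (sval x) s).
Proof.
move=> v; rewrite /ex2_val /ex2_eval /=.
by rewrite nonempty_subE ?face_chain_simplex ?chain_ranks_neq0.
Qed.

End Ex2OfVertexMap.

Section Cells.

Variable Q : Poset.

(* [cone u v r] is the vertex [r :|: [set setT]] of a copy of sd^2 Delta^n glued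
   along [u] on sd^2 dDelta^n and mapped to [Q] by [v]. A [junk] cell is never
   valid: it makes the type inhabited and carries a label so that [cell_label]
   is total. *)
Inductive cell :=
  | junk (q : Q)
  | cone n (u : fam n -> cell) (v : fam n -> Q) (r : fam n).

Fixpoint cell_le (x y : cell) : Prop :=
  match y with
  | junk q => x = junk q
  | cone n u v r =>
      (exists2 r', x = cone u v r' & r' \subset r) \/ (r != set0 /\ cell_le x (u r))
  end.

Definition cell_label (x : cell) : Q :=
  match x with junk q => q | cone n u v r => v (r :|: [set setT]) end.

Fixpoint cell_ok (x : cell) : Prop :=
  if x is cone n u v r then
    [/\ proper_chain r,
        forall s, sd2_bd_vertex s -> cell_ok (u s),
        forall s s', sd2_bd_vertex s -> sd2_bd_vertex s' -> s \subset s' ->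
          cell_le (u s) (u s'),
        forall s, sd2_bd_vertex s -> cell_label (u s) = v s &
        forall s s', sd2_vertex s -> sd2_vertex s' -> s \subset s' -> ple (v s) (v s')]
  else False.

Fixpoint cell_height (x : cell) : nat :=
  if x is cone n u v r then (\max_(s : fam n) cell_height (u s)).+1 else 0.

Lemma cell_height_bd n u v r s : cell_height (u s) < cell_height (@cone n u v r).
Proof. by rewrite /= ltnS (leq_bigmax s). Qed.

Lemma cell_le_height x y : cell_le x y -> cell_height x <= cell_height y.
Proof.
elim: y => [q ->|n u IH v r [[r' -> _]|[_ /IH le_x]]] //.
exact: leq_trans le_x (ltnW (cell_height_bd u v r r)).
Qed.

Lemma cell_le_refl x : cell_le x x.
Proof. by case: x => [|n u v r] //=; left; exists r. Qed.

Lemma cone_inj n u v r r' : @cone n u v r = cone u v r' -> r = r'.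
Proof. by case=> /(@inj_pair2 _ fam). Qed.

Lemma cell_le_antisym x y : cell_le x y -> cell_le y x -> x = y.
Proof.
case: y => [q -> //|n u v r] /=.
case=> [[r' -> sub_r'r]|[_ /cell_le_height le_x]] /=.
  case=> [[r'' /cone_inj <- sub_rr']|[_ /cell_le_height le_h]].
    by congr cone; apply/eqP; rewrite eqEsubset sub_r'r sub_rr'.
  by have := leq_trans (cell_height_bd u v r' r') le_h; rewrite ltnn.
move=> /cell_le_height /(leq_trans (cell_height_bd u v r r)) /(leq_ltn_trans le_x).
by rewrite ltnn.
Qed.

Lemma cell_le_trans z : cell_ok z -> forall x y, cell_le x y -> cell_le y z -> cell_le x z.
Proof.
elim: z => [q|n u IH v r] //= [pr_r u_ok u_mono _ _] x y le_xy.
have bd (r' : fam n) : r' \subset r -> r' != set0 -> sd2_bd_vertex r'.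
  by move=> sub r'_neq0; rewrite /sd2_bd_vertex r'_neq0 (proper_chainS sub pr_r).
case=> [[r' y_def sub_r'r]|[r_neq0 le_y]]; last first.
  by right; split=> //; apply: (IH r (u_ok r (bd r (subxx r) r_neq0)) x y).
move: le_xy; rewrite y_def /= => -[[r'' -> sub_r''r']|[r'_neq0 le_x]].
  by left; exists r'' => //; apply: subset_trans sub_r''r' sub_r'r.
have bd_r := bd r (subxx r) (subset_neq0 sub_r'r r'_neq0).
right; split; first exact: subset_neq0 sub_r'r r'_neq0.
apply: (IH r (u_ok r bd_r) x (u r') le_x).
exact: u_mono (bd _ sub_r'r r'_neq0) bd_r sub_r'r.
Qed.

Definition CellPoset : Poset.
Proof.
refine (@Build_Poset {x | cell_ok x} (fun x y => cell_le (sval x) (sval y)) _ _ _).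
- by move=> x; apply: cell_le_refl.
- by move=> x y le_xy le_yx; apply: sig_eq; apply: cell_le_antisym.
- by move=> x y z; apply: (cell_le_trans (svalP z)).
Defined.

Lemma cell_label_mono y x : cell_ok y -> cell_le x y -> ple (cell_label x) (cell_label y).
Proof.
elim: y x => [q|n u IH v r] //= x [pr_r u_ok _ u_label v_mono].
have v_r := sd2_vertex_setU1 pr_r.
case=> [[r' -> sub_r'r]|[r_neq0 le_x]] /=.
  by apply: v_mono (setSU _ sub_r'r); rewrite // sd2_vertex_setU1 ?(proper_chainS sub_r'r).
have bd_r : sd2_bd_vertex r by rewrite /sd2_bd_vertex r_neq0.
apply: ple_trans (IH _ _ (u_ok r bd_r) le_x) _; rewrite u_label //.
exact: v_mono (sd2_bd_vertexW bd_r) v_r (subsetUl _ _).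
Qed.

Definition cell_proj : Mono CellPoset Q.
Proof.
refine (@Build_Mono CellPoset Q (fun x => cell_label (sval x)) _).
by move=> x y; apply: cell_label_mono (svalP y).
Defined.

Lemma cell_le_cone_top n u v r y :
  cell_le (@cone n u v r) y -> cell_height y <= cell_height (cone u v r) ->
  exists2 r', y = cone u v r' & r \subset r'.
Proof.
case: y => [q|n' u' v' r'] //= [[r'' E sub]|[_ le_h]] h_le; last first.
  have := leq_trans (cell_le_height le_h) (cell_height_bd u' v' r' r').
  by move/(leq_trans)/(_ h_le); rewrite ltnn.
case: E => En; subst n' => Eu Ev Er.
rewrite -(inj_pair2 _ _ _ _ _ Eu) -(inj_pair2 _ _ _ _ _ Ev).
by exists r'; rewrite // (inj_pair2 _ _ _ _ _ Er).
Qed.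

End Cells.

Definition delta_id n : Delta n n.
Proof. by exists id. Defined.

Lemma delta_factor (Y : sSet) n (w : sMap (Delta n) Y) m (x : Delta n m) :
  w m x = smap (x : dmono m n) (w n (delta_id n)).
Proof. by rewrite -snat; congr (w m _); apply: sig_fun_eq. Qed.

Lemma boundary_factor (Y : sSet) n (w : sMap (Boundary n) Y) m (x : Boundary n m)
    (b : Boundary n n) :
  (forall i, sval (sval b) (sval (sval x) i) = sval (sval x) i) ->
  w m x = smap (sval x : dmono m n) (w n b).
Proof.
move=> bx; rewrite -snat; congr (w m _).
by apply: sig_eq; apply: sig_fun_eq => i /=; rewrite bx.
Qed.

Lemma ex2_val_map (P Q : Poset) (f : Mono P Q) m (Th : Ex (Ex (Nerve P)) m) (s : fam m) :
  ex2_val (ExMap (ExMap (NerveMap f)) m Th) s = f (ex2_val Th s).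
Proof. by []. Qed.

Definition fam_union m (s : fam m) : {set 'I_m.+1} := \bigcup_(T in s) T.

Lemma fam_union_mem m (s : fam m) : sd2_vertex s -> fam_union s \in s.
Proof.
case/and3P => /set0Pn [T1 sT1] _ ch.
case: (arg_maxnP (fun T : {set 'I_m.+1} => #|T|) sT1) => T0 sT0 T0_max.
suff -> : fam_union s = T0 by [].
apply/eqP; rewrite eqEsubset (bigcup_sup T0 sT0) andbT.
by apply/bigcupsP => T sT; apply: chain_sub_card ch sT sT0 (T0_max T sT).
Qed.

Lemma fam_unionS m (s s' : fam m) : s \subset s' -> fam_union s \subset fam_union s'.
Proof. by move=> ss'; apply/bigcupsP => T sT; apply/bigcup_sup/(subsetP ss'). Qed.

Definition retract_simplex n (R : {set 'I_n.+1}) : Delta n n := retract_delta R.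

Lemma retract_not_onto n (R : {set 'I_n.+1}) (y : 'I_n.+1) :
  R != set0 -> y \notin R -> forall i, sval (retract_simplex R) i != y.
Proof. by move=> R_neq0 yR i; apply: contraNneq yR => <-; apply: retract_mem. Qed.

Lemma fam_union_face n (s : fam n) :
  sd2_bd_vertex s -> exists y, forall i, sval (retract_simplex (fam_union s)) i != y.
Proof.
move=> bd_s; have v_s := sd2_bd_vertexW bd_s; have sU := fam_union_mem v_s.
have sT : setT \notin s by case/andP: bd_s => _ /and3P [].
have : ~~ ([set: 'I_n.+1] \subset fam_union s).
  by rewrite subTset; apply: contraNneq sT => <-.
case/subsetPn => y _ yU.
by exists y; apply: retract_not_onto yU; apply: sd2_vertex_neq0 v_s sU.
Qed.

Section Lifting.

Variables (Q : Poset) (n : nat).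
Variables (u : sMap (Boundary n) (Ex (Ex (Nerve (CellPoset Q)))))
          (v : sMap (Delta n) (Ex (Ex (Nerve Q)))).
Hypothesis uv : forall m x,
  ExMap (ExMap (NerveMap (cell_proj Q))) m (u m x) = v m (bd_incl n m x).

Definition top_val (s : fam n) : Q := ex2_val (v n (delta_id n)) s.

(* [u] evaluated on the boundary simplex retracting [n] onto the union of the
   chain [s]; this union is proper when [s] is a vertex of sd^2 dDelta^n, and
   otherwise [bd_val s] is a junk value. *)
Definition bd_val (s : fam n) : cell Q :=
  match excluded_middle_informative
          (exists y, forall i, sval (retract_simplex (fam_union s)) i != y) with
  | left face => sval (ex2_val (u n (exist _ _ face)) s)
  | right _ => junk (top_val s)
  end.

Lemma bd_valE s (b : Boundary n n) R :
  sd2_bd_vertex s -> sval b = retract_simplex R -> fam_union s \subset R ->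
  bd_val s = sval (ex2_val (u n b) s).
Proof.
move=> bd_s b_def sub_UR; rewrite /bd_val.
case: excluded_middle_informative => [face|]; last by case; apply: fam_union_face.
have U_neq0 : fam_union s != set0.
  by apply: sd2_vertex_neq0 (sd2_bd_vertexW bd_s) (fam_union_mem (sd2_bd_vertexW bd_s)).
congr sval; rewrite (boundary_factor u (b := b)); last first.
  by move=> i; rewrite b_def /= retract_id //; apply/(subsetP sub_UR)/retract_mem.
rewrite ex2_val_smap ?sd2_bd_vertexW // fam_image_id // => x Ux.
exact: retract_id.
Qed.

Lemma bd_val_ok s : sd2_bd_vertex s -> cell_ok (bd_val s).
Proof.
move=> bd_s; rewrite /bd_val.
case: excluded_middle_informative => [face|]; first exact: svalP.
by case; apply: fam_union_face.
Qed.

Lemma bd_val_label s : sd2_bd_vertex s -> cell_label (bd_val s) = top_val s.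
Proof.
move=> bd_s; have [y face] := fam_union_face bd_s.
pose b : Boundary n n := exist _ _ (ex_intro _ y face).
rewrite (bd_valE (b := b) bd_s (erefl _) (subxx _)).
rewrite -[cell_label _]/(ex2_val (ExMap (ExMap (NerveMap (cell_proj Q))) n (u n b)) s).
rewrite uv /top_val (delta_factor v) ex2_val_smap ?sd2_bd_vertexW //.
by rewrite fam_image_id // => x Ux; apply: retract_id.
Qed.

Lemma bd_val_mono s s' : sd2_bd_vertex s -> sd2_bd_vertex s' -> s \subset s' ->
  cell_le (bd_val s) (bd_val s').
Proof.
move=> bd_s bd_s' ss'; have [y face] := fam_union_face bd_s'.
pose b : Boundary n n := exist _ _ (ex_intro _ y face).
rewrite (bd_valE (b := b) bd_s (erefl _) (fam_unionS ss')).
rewrite (bd_valE (b := b) bd_s' (erefl _) (subxx _)).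
exact: (ex2_val_mono (u n b) (sd2_bd_vertexW bd_s) (sd2_bd_vertexW bd_s') ss').
Qed.

Lemma top_val_mono s s' : sd2_vertex s -> sd2_vertex s' -> s \subset s' ->
  ple (top_val s) (top_val s').
Proof. exact: ex2_val_mono. Qed.

Lemma new_cone_ok r : proper_chain r -> cell_ok (cone bd_val top_val r).
Proof.
move=> pr_r; split=> //.
- exact: bd_val_ok.
- exact: bd_val_mono.
- exact: bd_val_label.
- exact: top_val_mono.
Qed.

(* The vertices of sd^2 Delta^n containing [n] go to the new cone, the other
   vertices to [bd_val]; non-vertices get a junk value. *)
Definition lift_val (s : fam n) : cell Q :=
  if sd2_vertex s then
    if setT \in s then cone bd_val top_val (s :\ setT) else bd_val s
  else cone bd_val top_val set0.

Lemma lift_val_ok s : cell_ok (lift_val s).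
Proof.
rewrite /lift_val; case: ifP => [v_s|_]; last exact/new_cone_ok/proper_chain0.
case: ifP => [_|sT]; first exact/new_cone_ok/proper_chainD1.
by apply: bd_val_ok; rewrite sd2_vertex_bd ?sT.
Qed.

Lemma lift_val_bd s : sd2_bd_vertex s -> lift_val s = bd_val s.
Proof.
move=> bd_s; rewrite /lift_val sd2_bd_vertexW //.
by case/andP: bd_s => _ /and3P [_ /negbTE -> _].
Qed.

Lemma lift_val_label s : sd2_vertex s -> cell_label (lift_val s) = top_val s.
Proof.
move=> v_s; case: (boolP (setT \in s)) => sT; last first.
  by rewrite lift_val_bd ?bd_val_label // sd2_vertex_bd.
by rewrite /lift_val v_s sT /= setUC setD1K.
Qed.

Lemma lift_val_mono s s' : sd2_vertex s -> sd2_vertex s' -> s \subset s' ->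
  cell_le (lift_val s) (lift_val s').
Proof.
move=> v_s v_s' ss'; case: (boolP (setT \in s')) => s'T; last first.
  have sT : setT \notin s by apply: contra s'T; apply: (subsetP ss').
  by rewrite !lift_val_bd ?sd2_vertex_bd //; apply: bd_val_mono; rewrite ?sd2_vertex_bd.
rewrite {2}/lift_val v_s' s'T; case: (boolP (setT \in s)) => sT.
  by rewrite /lift_val v_s sT; left; exists (s :\ setT); rewrite // setSD.
have sub : s \subset s' :\ setT.
  apply/subsetP => T sT'; rewrite !inE (subsetP ss') // andbT.
  by apply: contraNneq sT => <-.
have s_neq0 : s != set0 by case/and3P: v_s.
have s'_neq0 : s' :\ setT != set0 by apply: subset_neq0 sub s_neq0.
have bd_s' : sd2_bd_vertex (s' :\ setT) by rewrite /sd2_bd_vertex s'_neq0 proper_chainD1.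
rewrite lift_val_bd ?sd2_vertex_bd //; right; split=> //.
by apply: bd_val_mono sub => //; apply: sd2_vertex_bd.
Qed.

Definition lift_point (s : fam n) : CellPoset Q := exist _ (lift_val s) (lift_val_ok s).

Lemma lift_point_mono s s' : sd2_vertex s -> sd2_vertex s' -> s \subset s' ->
  ple (lift_point s) (lift_point s').
Proof. exact: lift_val_mono. Qed.

Definition lift : sMap (Delta n) (Ex (Ex (Nerve (CellPoset Q)))) :=
  ex2_of_vertex_map lift_point_mono.

Lemma lift_bd m (x : Boundary n m) : lift m (bd_incl n m x) = u m x.
Proof.
apply: ex2_ext => s v_s; rewrite ex2_of_vertex_mapE //.
case: x => x [y x_y] /=; set R := sval x @: setT.
have R_neq0 : R != set0 by apply/set0Pn; exists (sval x ord0); apply: imset_f.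
have yR : y \notin R by apply/imsetP => -[i _ /esym/eqP]; apply/negP/x_y.
pose b : Boundary n n :=
  exist _ (retract_simplex R) (ex_intro _ y (retract_not_onto R_neq0 yR)).
set s' := fam_image (sval x) s.
have U_R : fam_union s' \subset R.
  by apply/bigcupsP => _ /imsetP [T _ ->]; apply/imsetS/subsetT.
have bd_s' : sd2_bd_vertex s'.
  apply: sd2_vertex_bd; first exact: sd2_vertex_image.
  by move: (yR); apply: contra => s'T; apply: (subsetP U_R); apply/bigcupP; exists setT.
apply: sig_eq; rewrite /= lift_val_bd // (bd_valE (b := b) bd_s' (erefl _) U_R).
rewrite [in RHS](boundary_factor u (b := b)) ?ex2_val_smap //.
by move=> i; rewrite /= retract_id //; apply: imset_f.
Qed.

Lemma lift_proj m (x : Delta n m) :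
  ExMap (ExMap (NerveMap (cell_proj Q))) m (lift m x) = v m x.
Proof.
apply: ex2_ext => s v_s; rewrite ex2_val_map ex2_of_vertex_mapE //=.
by rewrite lift_val_label ?sd2_vertex_image // /top_val (delta_factor v x) ex2_val_smap.
Qed.

End Lifting.

Theorem cell_proj_acyclic_fibration (Q : Poset) : pos_acyclic_fibration (cell_proj Q).
Proof.
by move=> n u v uv; exists (lift uv); split; [apply: lift_bd | apply: lift_proj].
Qed.

Definition Aelt_code (x : Aelt) : 'I_6 :=
  inord (match x with a1 => 0 | a2 => 1 | b1 => 2 | b2 => 3 | c1 => 4 | c2 => 5 end).

Definition Aelt_decode (i : 'I_6) : Aelt :=
  match nat_of_ord i with 0 => a1 | 1 => a2 | 2 => b1 | 3 => b2 | 4 => c1 | _ => c2 end.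

Lemma Aelt_codeK : cancel Aelt_code Aelt_decode.
Proof. by case; rewrite /Aelt_decode /Aelt_code inordK. Qed.

HB.instance Definition _ := Finite.copy Aelt (can_type Aelt_codeK).

Lemma Ale_eq_of_lower_levels z a :
  Ale z a -> 0 < Alevel a -> (forall y, Alevel y < Alevel a -> Ale y z) -> z = a.
Proof.
case=> [//|lt_za]; case: a z lt_za => -[] //= _ _ lower;
  first [ by case: (lower a1 isT) | by case: (lower a2 isT)
        | by case: (lower b1 isT) | by case: (lower b2 isT) ].
Qed.

Lemma no_between_b_c z : Ale b1 z -> Ale b2 z -> Ale z c1 -> Ale z c2 -> False.
Proof. by case: z => -[] // _ [] // _ [] // _ []. Qed.

Section Descent.

Variable s : Aelt -> cell Aposet.
Hypotheses (s_ok : forall a, cell_ok (s a))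
           (s_mono : forall a b, Ale a b -> cell_le (s a) (s b))
           (s_label : forall a, cell_label (s a) = a).

Variables (n : nat) (u : fam n -> cell Aposet) (v : fam n -> Aelt).
Variables (r0 : fam n) (x0 : Aelt).
Hypotheses (s_x0 : s x0 = cone u v r0)
           (x0_max : forall a, cell_height (s a) <= cell_height (s x0)).

Definition in_top a := exists r, s a = cone u v r.

Lemma top_ok :
  [/\ forall r, sd2_bd_vertex r -> cell_ok (u r),
      forall r r', sd2_bd_vertex r -> sd2_bd_vertex r' -> r \subset r' ->
        cell_le (u r) (u r'),
      forall r, sd2_bd_vertex r -> cell_label (u r) = v r &
      forall r r', sd2_vertex r -> sd2_vertex r' -> r \subset r' -> Ale (v r) (v r')].
Proof. by have := s_ok x0; rewrite s_x0 => -[]. Qed.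

Lemma top_proper a r : s a = cone u v r -> proper_chain r.
Proof. by move=> Ea; have := s_ok a; rewrite Ea => -[]. Qed.

Lemma in_top_up a b : Ale a b -> in_top a -> in_top b.
Proof.
move=> le_ab [ra Ea]; have := s_mono le_ab; rewrite Ea => /cell_le_cone_top [].
  by have := x0_max b; rewrite s_x0.
by move=> rb Eb _; exists rb.
Qed.

Lemma top_sub a b ra rb :
  s a = cone u v ra -> s b = cone u v rb -> Ale a b -> ra \subset rb.
Proof.
move=> Ea Eb le_ab; have := s_mono le_ab; rewrite Ea => /cell_le_cone_top [].
  by rewrite Eb.
by move=> rb'; rewrite Eb => /cone_inj ->.
Qed.

Lemma below_top a y ra : s a = cone u v ra -> Ale y a -> ~ in_top y ->
  ra != set0 /\ cell_le (s y) (u ra).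
Proof.
move=> Ea le_ya y_out; have := s_mono le_ya; rewrite Ea => -[[r' Ey _]|//].
by case: y_out; exists r'.
Qed.

Lemma not_in_top_b : ~ (in_top b1 /\ in_top b2).
Proof.
case=> -[rb1 Eb1] [rb2 Eb2].
have [rc1 Ec1] := in_top_up (or_intror isT : Ale b1 c1) (ex_intro _ rb1 Eb1).
have [rc2 Ec2] := in_top_up (or_intror isT : Ale b1 c2) (ex_intro _ rb1 Eb1).
have sub_c1 : rb1 :|: rb2 \subset rc1.
  by rewrite subUset (top_sub Eb1 Ec1) ?(top_sub Eb2 Ec1) //; right.
have sub_c2 : rb1 :|: rb2 \subset rc2.
  by rewrite subUset (top_sub Eb1 Ec2) ?(top_sub Eb2 Ec2) //; right.
have w_ok : cell_ok (cone u v (rb1 :|: rb2)).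
  have [u_ok u_mono u_label v_mono] := top_ok.
  by split=> //; apply: proper_chainS sub_c1 (top_proper Ec1).
have below_w (r : fam n) :
    r \subset rb1 :|: rb2 -> cell_le (cone u v r) (cone u v (rb1 :|: rb2)).
  by move=> sub; left; exists r.
have above_w (r : fam n) :
    rb1 :|: rb2 \subset r -> cell_le (cone u v (rb1 :|: rb2)) (cone u v r).
  by move=> sub; left; exists (rb1 :|: rb2).
apply: (@no_between_b_c (cell_label (cone u v (rb1 :|: rb2)))).
- by rewrite -[b1]s_label Eb1; apply: cell_label_mono w_ok (below_w _ (subsetUl _ _)).
- by rewrite -[b2]s_label Eb2; apply: cell_label_mono w_ok (below_w _ (subsetUr _ _)).
- rewrite -[c1]s_label Ec1; apply: cell_label_mono (above_w _ sub_c1).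
  by rewrite -Ec1.
rewrite -[c2]s_label Ec2; apply: cell_label_mono (above_w _ sub_c2).
by rewrite -Ec2.
Qed.

Lemma not_in_top_level0 a : Alevel a = 0 -> ~ in_top a.
Proof.
by move=> a0 top_a; apply: not_in_top_b; split; apply: in_top_up top_a; right; rewrite a0.
Qed.

Lemma in_top_level a : in_top a -> 0 < Alevel a.
Proof. by move=> top_a; rewrite lt0n; apply/eqP => /not_in_top_level0. Qed.

Lemma top_bd_vertex a ra : s a = cone u v ra -> sd2_bd_vertex ra.
Proof.
move=> Ea; rewrite /sd2_bd_vertex (top_proper Ea) andbT.
have le_a1a : Ale a1 a by right; apply: in_top_level; exists ra.
by case: (below_top Ea le_a1a (@not_in_top_level0 a1 erefl)).
Qed.

Lemma top_label_level k a ra : Alevel a <= k -> s a = cone u v ra -> v ra = a.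
Proof.
have [u_ok _ u_label v_mono] := top_ok.
elim: k a ra => [|k IH] a ra le_ak Ea; have pos_a := in_top_level (ex_intro _ ra Ea).
  by move: pos_a; rewrite lt0n -leqn0 le_ak.
have bd_ra := top_bd_vertex Ea.
have le_va : Ale (v ra) a.
  rewrite -[X in Ale _ X]s_label Ea; apply: v_mono (subsetUl _ _).
    exact: sd2_bd_vertexW.
  exact/sd2_vertex_setU1/(top_proper Ea).
apply: Ale_eq_of_lower_levels le_va pos_a _ => y lt_ya; have le_ya : Ale y a by right.
case: (classic (in_top y)) => [[ry Ey]|y_out].
  rewrite -{1}(IH y ry _ Ey); last by rewrite -ltnS (leq_trans lt_ya).
  apply: v_mono (top_sub Ey Ea le_ya); apply: sd2_bd_vertexW => //.
  exact: top_bd_vertex Ey.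
have [_ le_y] := below_top Ea le_ya y_out.
by rewrite -[y]s_label -(u_label _ bd_ra); apply: cell_label_mono (u_ok _ bd_ra) le_y.
Qed.

Lemma top_label a ra : s a = cone u v ra -> v ra = a.
Proof. exact: top_label_level. Qed.

Definition cone_foot (x : cell Aposet) : cell Aposet :=
  if x is cone _ u' _ r then u' r else x.

Definition descend a : cell Aposet :=
  if excluded_middle_informative (in_top a) then cone_foot (s a) else s a.

Lemma descend_top a ra : s a = cone u v ra -> descend a = u ra.
Proof.
rewrite /descend => Ea.
case: (excluded_middle_informative (in_top a)) => [top_a|a_out]; first by rewrite Ea.
by case: a_out; exists ra.
Qed.

Lemma descend_out a : ~ in_top a -> descend a = s a.
Proof. by rewrite /descend; case: (excluded_middle_informative (in_top a)). Qed.

Lemma descend_ok a : cell_ok (descend a).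
Proof.
have [u_ok _ _ _] := top_ok.
case: (classic (in_top a)) => [[ra Ea]|a_out]; last by rewrite descend_out.
by rewrite (descend_top Ea); apply/u_ok/(top_bd_vertex Ea).
Qed.

Lemma descend_mono a b : Ale a b -> cell_le (descend a) (descend b).
Proof.
have [_ u_mono _ _] := top_ok; move=> le_ab.
case: (classic (in_top b)) => [[rb Eb]|b_out]; last first.
  have a_out : ~ in_top a by move/(in_top_up le_ab).
  by rewrite !descend_out //; apply: s_mono.
rewrite (descend_top Eb); case: (classic (in_top a)) => [[ra Ea]|a_out].
  rewrite (descend_top Ea); apply: u_mono (top_sub Ea Eb le_ab).
    exact: top_bd_vertex Ea.
  exact: top_bd_vertex Eb.
by rewrite descend_out //; case: (below_top Eb le_ab a_out).
Qed.

Lemma descend_label a : cell_label (descend a) = a.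
Proof.
have [_ _ u_label _] := top_ok.
case: (classic (in_top a)) => [[ra Ea]|a_out]; last by rewrite descend_out.
by rewrite (descend_top Ea) u_label ?(top_label Ea) ?(top_bd_vertex Ea).
Qed.

Lemma descend_height : \sum_a cell_height (descend a) < \sum_a cell_height (s a).
Proof.
have le_h a : cell_height (descend a) <= cell_height (s a).
  case: (classic (in_top a)) => [[ra Ea]|a_out]; last by rewrite descend_out.
  by rewrite (descend_top Ea) Ea ltnW // cell_height_bd.
rewrite [X in _ < X](bigD1 x0) //= [X in X < _](bigD1 x0) //= -addSn.
rewrite leq_add // ?(descend_top s_x0) ?s_x0 ?cell_height_bd //.
by apply: leq_sum => a _.
Qed.

End Descent.

Lemma no_cell_section (s : Aelt -> cell Aposet) :
  (forall a, cell_ok (s a)) -> (forall a b, Ale a b -> cell_le (s a) (s b)) ->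
  ~ (forall a, cell_label (s a) = a).
Proof.
have [N] := ubnP (\sum_a cell_height (s a)).
elim: N s => // N IH s lt_N s_ok s_mono s_label.
case: (arg_maxnP (fun a => cell_height (s a)) (isT : predT a1)) => x0 _ x0_max.
case s_x0: (s x0) => [q|n u v r0]; first by have := s_ok x0; rewrite s_x0.
have x0_max' a : cell_height (s a) <= cell_height (s x0) by apply: x0_max.
apply: (IH (descend s u v)).
- by apply: leq_trans (descend_height s_x0) _; rewrite -ltnS.
- exact: (descend_ok s_ok s_mono s_label s_x0 x0_max').
- by move=> a b; apply: (descend_mono s_ok s_mono s_label s_x0 x0_max').
- exact: (descend_label s_ok s_mono s_label s_x0 x0_max').
Qed.

Theorem proposition6p2 : ~ pos_cofibrant Aposet.
Proof.
move=> cofA.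
pose idA : Mono Aposet Aposet := Build_Mono (fun (x y : Aposet) (le_xy : ple x y) => le_xy).
have [l l_sect] := cofA _ _ _ (@cell_proj_acyclic_fibration Aposet) idA.
exact: (no_cell_section (fun a => svalP (l a)) (fun a b => @mfun_mono _ _ l a b) l_sect).
Qed.
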